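(* Let $(N,C,\mathbf{A},k)$ be an instance with $|N|=n$ having at least one cohesive group, and let $c_{\max}$ be its maximum JR degree. If $n>k^2(c_{\max}-1)$, then the committee output by GreedyAV has JR degree $c_{\max}$.
   Context: An instance consists of voters $N=\{1,\dots,n\}$, candidates $C$, approval ballots $A_i\subseteq C$ for $i\in N$, and a committee size $k$ with $1\le k\le|C|$. $N'\subseteq N$ is a cohesive group if $|N'|\ge n/k$ and $|\bigcap_{i\in N'}A_i|\ge1$. A size-$k$ committee $W\subseteq C$ achieves JR degree $c$ if every cohesive group contains at least $c$ voters $i$ with $|A_i\cap W|\ge1$; its JR degree is the largest such $c$, and the maximum JR degree of the instance is the maximum over all size-$k$ committees. GreedyAV: start with $W=\emptyset$ and remaining voters $R=N$; repeat $k$ times: choose a candidate $c\notin W$ approved by the maximum number of voters in $R$ (ties arbitrary), add $c$ to $W$, and remove from $R$ all voters approving $c$; output $W$. *)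

From mathcomp Require Import all_boot.
Set Implicit Arguments.
Unset Strict Implicit.
Unset Printing Implicit Defensive.

Section JR.
Variables (n : nat) (C : finType) (A : 'I_n -> {set C}) (k : nat).

(* N' is cohesive: |N'| >= n/k (i.e. n <= |N'| * k) and the voters of N'
   have a common approved candidate. *)
Definition cohesive (S : {set 'I_n}) : Prop :=
  n <= #|S| * k /\ \bigcap_(i in S) A i != set0.

Definition achieves_jr (W : {set C}) (c : nat) : Prop :=
  forall S : {set 'I_n}, cohesive S ->
    c <= #|[set i in S | A i :&: W != set0]|.

Definition is_jr_degree (W : {set C}) (d : nat) : Prop :=
  achieves_jr W d /\ forall c, achieves_jr W c -> c <= d.

Definition is_max_jr_degree (cmax : nat) : Prop :=
  (exists W : {set C}, #|W| = k /\ is_jr_degree W cmax) /\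
  (forall (W : {set C}) d, #|W| = k -> is_jr_degree W d -> d <= cmax).

Definition remaining (W : {set C}) : {set 'I_n} :=
  [set i | [disjoint A i & W]].

Definition av_score (W : {set C}) (c : C) : nat :=
  #|[set i in remaining W | c \in A i]|.

(* A legal GreedyAV step from the current committee W (ties arbitrary). *)
Definition greedy_step (W : {set C}) (c : C) : bool :=
  (c \notin W) && [forall d, (d \notin W) ==> (av_score W d <= av_score W c)].

Inductive greedyAV_run : nat -> {set C} -> Prop :=
| greedy0 : greedyAV_run 0 set0
| greedyS j W c : greedyAV_run j W -> greedy_step W c ->
    greedyAV_run j.+1 (c |: W).

Definition greedyAV_output (W : {set C}) : Prop := greedyAV_run k W.

End JR.

From mathcomp Require Import all_boot.
From mathcomp Require Import zify.

(** Let [S] be a cohesive group with common candidate [x]. If GreedyAV picks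
    [x], all of [S] is covered, and [|S| >= cmax]. Otherwise, in every round [x] was available,
    so the chosen candidate removed at least as many remaining voters as
    there are uncovered voters of [S]. With [s = |S|] and [a] the number of
    covered voters of [S] at the end, the [k] rounds together with the
    uncovered part of [S] account for [(k+1) s - k a <= n] voters; since
    [k s >= n], this forces [n <= k^2 a]. *)

Set Implicit Arguments.
Unset Strict Implicit.
Unset Printing Implicit Defensive.

Section GreedyAV.
Variables (n : nat) (C : finType) (A : 'I_n -> {set C}) (k : nat).

Definition covered (S : {set 'I_n}) (W : {set C}) : {set 'I_n} :=
  [set i in S | A i :&: W != set0].

Lemma remaining0 : remaining A set0 = setT.
Proof. by apply/setP => i; rewrite !inE -setI_eq0 setI0 eqxx. Qed.

Lemma remainingU1 W c :
  remaining A (c |: W) = remaining A W :\: [set i | c \in A i].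
Proof.
apply/setP => i; rewrite !inE -!setI_eq0 setIUr setU_eq0.
by rewrite [A i :&: [set c]]setIC [[set c] :&: _ == _]setI_eq0 disjoints1 andbC.
Qed.

Lemma card_remainingU1 W c :
  #|remaining A W| = #|remaining A (c |: W)| + av_score A W c.
Proof.
rewrite remainingU1 /av_score -(cardsID [set i | c \in A i] (remaining A W)).
by rewrite addnC; congr (_ + _); apply: eq_card => i; rewrite !inE.
Qed.

Lemma coveredE S W : covered S W = S :\: remaining A W.
Proof. by apply/setP => i; rewrite !inE -setI_eq0 andbC. Qed.

Lemma covered_sub S W : covered S W \subset S.
Proof. by rewrite coveredE subsetDl. Qed.

Lemma card_covered S W : #|S :&: remaining A W| + #|covered S W| = #|S|.
Proof. by rewrite coveredE cardsID. Qed.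

Lemma covered0 S : covered S set0 = set0.
Proof. by rewrite coveredE remaining0 setDT. Qed.

Lemma covered_subU1 S W c : covered S W \subset covered S (c |: W).
Proof. by rewrite !coveredE setDS // remainingU1 subsetDl. Qed.

Lemma card_greedyAV_run j W : greedyAV_run A j W -> #|W| = j.
Proof.
elim=> [|{}j {}W c _ IH /andP[cW _]]; first by rewrite cards0.
by rewrite cardsU1 cW IH.
Qed.

Section CommonCandidate.
Variables (S : {set 'I_n}) (x : C).
Hypothesis S_x : forall i, i \in S -> x \in A i.

Lemma greedy_step_score W c :
  greedy_step A W c -> x \notin W -> #|S :&: remaining A W| <= av_score A W c.
Proof.
case/andP=> _ /forallP/(_ x) + xW; rewrite xW; apply: leq_trans.
apply/subset_leq_card/subsetP => i; rewrite !inE => /andP[iS ->].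
by rewrite S_x.
Qed.

(** The [+ #|covered S W|] on the left is the gain of the first round, in
    which no voter of [S] is covered yet. *)
Lemma greedyAV_run_invariant j W :
  greedyAV_run A j W -> x \notin W ->
  #|remaining A W| + j * #|S| + #|covered S W| <= n + j * #|covered S W|.
Proof.
elim=> [|{}j {}W c _ IH step] xcW.
  by rewrite remaining0 cardsT card_ord covered0 cards0 !mul0n !addn0.
have xW : x \notin W by apply: contra xcW => xW; rewrite inE xW orbT.
have score := greedy_step_score step xW.
have split_S := card_covered S W.
have grow := subset_leq_card (covered_subU1 S W c).
have grow_j : j * #|covered S W| <= j * #|covered S (c |: W)|.
  by rewrite leq_mul2l grow orbT.
have := card_remainingU1 W c; have := IH xW; lia.
Qed.

End CommonCandidate.

Lemma greedyAV_output_covers_cohesive W S :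
  greedyAV_output A k W -> cohesive A k S ->
  covered S W = S \/ n <= k ^ 2 * #|covered S W|.
Proof.
move=> run [large /set0Pn[x /bigcapP S_x]].
have [xW | xW] := boolP (x \in W).
  left; apply/eqP; rewrite eqEsubset covered_sub; apply/subsetP => i iS.
  by rewrite inE iS; apply/set0Pn; exists x; rewrite inE S_x.
right; have count : k.+1 * #|S| <= n + k * #|covered S W|.
  have := greedyAV_run_invariant S_x run xW.
  have := card_covered S W.
  have := subset_leq_card (subsetIr S (remaining A W)).
  rewrite mulSn; lia.
nia.
Qed.

Definition achieves_jrb W c :=
  [forall S : {set 'I_n},
    (n <= #|S| * k) && (\bigcap_(i in S) A i != set0) ==>
    (c <= #|covered S W|)].

Lemma achieves_jrP W c : reflect (achieves_jr A k W c) (achieves_jrb W c).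
Proof.
apply: (iffP forallP) => [ach S [large common] | ach S].
  by apply: (implyP (ach S)); rewrite large common.
by apply/implyP => /andP[large common]; apply: ach.
Qed.

Lemma exists_jr_degree W :
  (exists S, cohesive A k S) -> exists d, is_jr_degree A k W d.
Proof.
move=> [S0 coh0].
have le_n c : achieves_jrb W c -> c <= n.
  move=> /achieves_jrP/(_ S0 coh0)/leq_trans; apply.
  by apply: leq_trans (max_card _) _; rewrite card_ord.
have [|d /achieves_jrP ach_d max_d] := ex_maxnP _ le_n.
  by exists 0; apply/achieves_jrP => S _.
by exists d; split=> // c /achieves_jrP; apply: max_d.
Qed.

End GreedyAV.

Theorem proposition4 (n : nat) (C : finType) (A : 'I_n -> {set C}) (k : nat)
    (cmax : nat) :
  1 <= k <= #|C| ->
  (exists S : {set 'I_n}, cohesive A k S) ->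
  is_max_jr_degree A k cmax ->
  (* n > k^2 (cmax - 1), written without truncated subtraction *)
  k ^ 2 * cmax < n + k ^ 2 ->
  forall W : {set C}, greedyAV_output A k W -> is_jr_degree A k W cmax.
Proof.
move=> _ ex_coh [[W0 [_ [ach_W0 _]]] max_cmax] large_n W run.
have ach_W : achieves_jr A k W cmax.
  move=> S coh; have [covS | small] := greedyAV_output_covers_cohesive run coh.
    change (cmax <= #|covered A S W|); rewrite covS.
    exact: leq_trans (ach_W0 S coh) (subset_leq_card (covered_sub A S W0)).
  rewrite leqNgt; apply/negP => lt_cmax.
  have : k ^ 2 * #|covered A S W|.+1 <= k ^ 2 * cmax.
    by rewrite leq_mul2l lt_cmax orbT.
  rewrite mulnS; lia.
split=> // c ach_c.
have [d deg_d] := exists_jr_degree W ex_coh.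
have := max_cmax W d (card_greedyAV_run run) deg_d.
exact/leq_trans/(deg_d.2 c ach_c).
Qed.
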